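(* Let $(X,\|\cdot\|_X)\subset(Y,\|\cdot\|_Y)$ be normed spaces, $a\ge0$, $m\in\mathbb N_*$, $\theta>0$, and set $\gamma=\frac{\theta}{2m+\theta}$, $b=\frac{2ma}{2m+\theta}$. Then $S_{\theta,m,a}(X,Y)=K_{\gamma,b}(X,Y)$, and there is a constant $C$ (depending only on $\theta,m,a$) such that for every $y\in Y$, $$\frac1C\rho^{X,Y}_{\theta,m,a}(y)\le|y|_{\gamma,b}\le C\big(\|y\|_Y+\rho^{X,Y}_{\theta,m,a}(y)\big).$$
   Context: $K(y,t)=\inf_{x\in X}(\|y-x\|_Y+t\|x\|_X)$; $|y|_{\gamma,b}=\int_0^1t^{-\gamma}|\ln t|^bK(y,t)\frac{dt}t$; $K_{\gamma,b}(X,Y)=\{y\in Y:|y|_{\gamma,b}<\infty\}$. For a sequence $(x_n)_{n\ge1}\subset X$, $\pi_{\theta,m,a}(y,(x_n)_n)=\sum_{n\ge1}\big(2^{n\theta}n^a\|y-x_n\|_Y+2^{-2nm}\|x_n\|_X\big)$; $\rho^{X,Y}_{\theta,m,a}(y)=\inf_{(x_n)\subset X}\pi_{\theta,m,a}(y,(x_n)_n)$; $S_{\theta,m,a}(X,Y)=\{y\in Y:\rho^{X,Y}_{\theta,m,a}(y)<\infty\}$. *)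

From Stdlib Require Import Reals Classical ClassicalEpsilon.
Open Scope R_scope.

Inductive ER : Type := Fin (r : R) | PInf.

Definition ER_le (x y : ER) : Prop :=
  match x, y with
  | _, PInf => True
  | PInf, Fin _ => False
  | Fin a, Fin b => a <= b
  end.

Definition ER_plus (x y : ER) : ER :=
  match x, y with
  | Fin a, Fin b => Fin (a + b)
  | _, _ => PInf
  end.

Definition ER_scal (c : R) (x : ER) : ER :=
  match x with Fin a => Fin (c * a) | PInf => PInf end.

(** Supremum of a set of reals (junk value 0 if empty / unbounded). *)
Definition Rsup (E : R -> Prop) : R :=
  match excluded_middle_informative (bound E /\ exists x, E x) with
  | left H => proj1_sig (completeness E (proj1 H) (proj2 H))
  | right _ => 0
  end.

(** Infimum of a set of reals (used only for sets bounded below). *)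
Definition Rinf (E : R -> Prop) : R := - Rsup (fun r => E (- r)).

Definition ER_sup (E : R -> Prop) : ER :=
  match excluded_middle_informative (bound E) with
  | left _ => Fin (Rsup E)
  | right _ => PInf
  end.

Definition ER_inf (E : ER -> Prop) : ER :=
  match excluded_middle_informative (exists r, E (Fin r)) with
  | left _ => Fin (Rinf (fun r => E (Fin r)))
  | right _ => PInf
  end.

Definition series_val (u : nat -> R) : ER :=
  ER_sup (fun s => exists N : nat, s = sum_f_R0 (fun k => u (S k)) N).

(** * A pair of normed spaces X ⊂ Y over R.
    Y is a real normed vector space; X is a linear subspace of Y
    (membership [Xmem]) carrying its own norm [Xnorm]. *)
Record NormedPair : Type := {
  Ycar : Type;
  Yzero : Ycar;
  Yadd : Ycar -> Ycar -> Ycar;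
  Yopp : Ycar -> Ycar;
  Yscal : R -> Ycar -> Ycar;
  Ynorm : Ycar -> R;
  Xmem : Ycar -> Prop;
  Xnorm : Ycar -> R;
  Yadd_assoc : forall u v w, Yadd u (Yadd v w) = Yadd (Yadd u v) w;
  Yadd_comm : forall u v, Yadd u v = Yadd v u;
  Yadd_0 : forall u, Yadd Yzero u = u;
  Yadd_opp : forall u, Yadd (Yopp u) u = Yzero;
  Yscal_assoc : forall a b u, Yscal a (Yscal b u) = Yscal (a * b) u;
  Yscal_1 : forall u, Yscal 1 u = u;
  Yscal_distr_v : forall a u v, Yscal a (Yadd u v) = Yadd (Yscal a u) (Yscal a v);
  Yscal_distr_s : forall a b u, Yscal (a + b) u = Yadd (Yscal a u) (Yscal b u);
  Ynorm_nonneg : forall u, 0 <= Ynorm u;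
  Ynorm_eq0 : forall u, Ynorm u = 0 -> u = Yzero;
  Ynorm_scal : forall a u, Ynorm (Yscal a u) = Rabs a * Ynorm u;
  Ynorm_triangle : forall u v, Ynorm (Yadd u v) <= Ynorm u + Ynorm v;
  Xmem_0 : Xmem Yzero;
  Xmem_add : forall u v, Xmem u -> Xmem v -> Xmem (Yadd u v);
  Xmem_scal : forall a u, Xmem u -> Xmem (Yscal a u);
  Xnorm_nonneg : forall u, Xmem u -> 0 <= Xnorm u;
  Xnorm_eq0 : forall u, Xmem u -> Xnorm u = 0 -> u = Yzero;
  Xnorm_scal : forall a u, Xmem u -> Xnorm (Yscal a u) = Rabs a * Xnorm u;
  Xnorm_triangle : forall u v, Xmem u -> Xmem v ->
      Xnorm (Yadd u v) <= Xnorm u + Xnorm v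
}.

Definition Ysub (P : NormedPair) (u v : Ycar P) : Ycar P :=
  Yadd P u (Yopp P v).

Definition Kfun (P : NormedPair) (y : Ycar P) (t : R) : R :=
  Rinf (fun r => exists x, Xmem P x /\
          r = Ynorm P (Ysub P y x) + t * Xnorm P x).

Definition Kintegrand (P : NormedPair) (gamma b : R) (y : Ycar P) (t : R) : R :=
  Rpower t (- gamma) * Rpower (Rabs (ln t)) b * Kfun P y t / t.

(** |y|_{gamma,b} = int_0^1 t^{-gamma} |ln t|^b K(y,t) dt/t  (in [0,+oo]),
    as an improper Riemann integral of a nonnegative function: the
    supremum of its integrals over compact subintervals [u,v] of (0,1). *)
Definition Knorm (P : NormedPair) (gamma b : R) (y : Ycar P) : ER :=
  ER_sup (fun r => exists (u v : R)
            (pr : Riemann_integrable (Kintegrand P gamma b y) u v),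
            0 < u /\ u <= v /\ v < 1 /\ r = RiemannInt pr).

Definition Kspace (P : NormedPair) (gamma b : R) (y : Ycar P) : Prop :=
  Knorm P gamma b y <> PInf.

Definition pi_term (P : NormedPair) (theta : R) (m : nat) (a : R)
  (y : Ycar P) (x : nat -> Ycar P) (n : nat) : R :=
  Rpower 2 (INR n * theta) * Rpower (INR n) a * Ynorm P (Ysub P y (x n))
  + Rpower 2 (- (2 * INR n * INR m)) * Xnorm P (x n).

Definition pi_val (P : NormedPair) (theta : R) (m : nat) (a : R)
  (y : Ycar P) (x : nat -> Ycar P) : ER :=
  series_val (pi_term P theta m a y x).

Definition rho (P : NormedPair) (theta : R) (m : nat) (a : R) (y : Ycar P) : ER :=
  ER_inf (fun v => exists x : nat -> Ycar P,
            (forall n, (1 <= n)%nat -> Xmem P (x n)) /\ v = pi_val P theta m a y x).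

Definition Sspace (P : NormedPair) (theta : R) (m : nat) (a : R) (y : Ycar P) : Prop :=
  rho P theta m a y <> PInf.

(** Let [L = 2m + theta] and [tau n = 2^{-nL} n^{-a}].  The proof compares both
    quantities with the block sum [sum_n 2^{n theta} n^a K(y, tau n)]:

    - Since [2^{n theta} n^a tau n = 2^{-2nm}], the n-th term of [pi(y,(x_n))] is
      [2^{n theta} n^a (||y - x_n||_Y + tau n ||x_n||_X) >= 2^{n theta} n^a K(y, tau n)],
      with near-equality for near-optimal [x_n]; hence [rho(y)] equals the block sum.
    - On the block [tau (n+1) <= t <= tau n] the weight [t^{-gamma} |ln t|^b / t] is
      comparable to [2^{n theta} n^a / tau n] (this is where [gamma] and [b] are
      tuned: [(1+gamma) L = L + theta] and [(1+gamma) a + b = 2a]), and [K(y,t)] is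
      comparable to [K(y, tau n)] by monotonicity of [K] and of [K(y,t)/t].
      Summing over blocks bounds [|y|_{gamma,b}] above by [M0 ||y||_Y + M1 rho(y)]
      (the term [M0 ||y||_Y] accounts for [tau 1 <= t < 1]) and below by a constant
      times the block sum, integrating only over the subintervals [tau n, c tau n]. *)

From Stdlib Require Import Reals Lra Lia Classical ClassicalEpsilon.
Open Scope R_scope.

Lemma Rsup_ub (E : R -> Prop) x : bound E -> E x -> x <= Rsup E.
Proof.
  intros Hb Hx. unfold Rsup.
  destruct (excluded_middle_informative _) as [H|H].
  - destruct (completeness E (proj1 H) (proj2 H)) as [s [Hs Hs2]]; simpl. now apply Hs.
  - exfalso; apply H; split; eauto.
Qed.

Lemma Rsup_lub (E : R -> Prop) M :
  (exists x, E x) -> (forall x, E x -> x <= M) -> Rsup E <= M.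
Proof.
  intros Hne Hb. unfold Rsup.
  destruct (excluded_middle_informative _) as [H|H].
  - destruct (completeness E (proj1 H) (proj2 H)) as [s [Hs1 Hs]]; simpl. now apply Hs.
  - exfalso; apply H; split; auto. now exists M.
Qed.

(* Infima are only taken of sets of nonnegative reals, which are bounded below. *)
Lemma Rinf_lb (E : R -> Prop) x : (forall z, E z -> 0 <= z) -> E x -> Rinf E <= x.
Proof.
  intros H0 Hx. unfold Rinf.
  assert (- x <= Rsup (fun r => E (- r))); [|lra].
  apply Rsup_ub; [|now rewrite Ropp_involutive].
  exists 0. intros z Hz. apply H0 in Hz. lra.
Qed.

Lemma Rinf_glb (E : R -> Prop) M :
  (exists x, E x) -> (forall x, E x -> M <= x) -> M <= Rinf E.
Proof.
  intros [x Hx] Hb. unfold Rinf.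
  assert (Rsup (fun r => E (- r)) <= - M); [|lra].
  apply Rsup_lub.
  - exists (- x). now rewrite Ropp_involutive.
  - intros z Hz. apply Hb in Hz. lra.
Qed.

Lemma ER_le_trans x y z : ER_le x y -> ER_le y z -> ER_le x z.
Proof. destruct x, y, z; simpl; tauto || lra. Qed.

Lemma ER_sup_le (E : R -> Prop) D :
  (exists e, E e) -> (forall e, E e -> e <= D) -> ER_le (ER_sup E) (Fin D).
Proof.
  intros Hne H. unfold ER_sup. destruct (excluded_middle_informative _) as [Hb|Hb].
  - now apply Rsup_lub.
  - apply Hb. now exists D.
Qed.

Lemma ER_sup_ge (E : R -> Prop) J e : ER_sup E = Fin J -> E e -> e <= J.
Proof.
  unfold ER_sup. destruct (excluded_middle_informative _) as [Hb|Hb];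
    intros H He; [|discriminate].
  injection H as <-. now apply Rsup_ub.
Qed.

Lemma ER_sup_le_scal_inf (E : R -> Prop) (F : ER -> Prop) C d :
  0 < C -> (exists e, E e) ->
  (forall e r, E e -> F (Fin r) -> e <= C * (d + r)) ->
  ER_le (ER_sup E) (ER_scal C (ER_plus (Fin d) (ER_inf F))).
Proof.
  intros HC Hne H. unfold ER_inf.
  destruct (excluded_middle_informative _) as [HF|HF].
  2:{ simpl. destruct (ER_sup E); exact I. }
  simpl. apply ER_sup_le; auto. intros e He.
  assert (e / C - d <= Rinf (fun r => F (Fin r))).
  { apply Rinf_glb; auto. intros r Hr. specialize (H e r He Hr).
    apply Rmult_le_reg_l with C; auto. unfold Rdiv.
    rewrite Rmult_minus_distr_l, <- Rmult_assoc, (Rmult_comm C e), Rmult_assoc,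
      Rinv_r, Rmult_1_r by lra. lra. }
  apply Rmult_le_compat_l with (r := C) in H0; [|lra].
  replace (C * (e / C - d)) with (e - C * d) in H0 by (field; lra). lra.
Qed.

Lemma ER_scal_inf_le (F : ER -> Prop) k D :
  0 < k -> (forall r, F (Fin r) -> 0 <= r) ->
  (forall eps, 0 < eps -> exists r, F (Fin r) /\ r <= D + eps) ->
  ER_le (ER_scal k (ER_inf F)) (Fin (k * D)).
Proof.
  intros Hk H0 Happ. unfold ER_inf.
  destruct (excluded_middle_informative _) as [HF|HF].
  2:{ exfalso. destruct (Happ 1 ltac:(lra)) as [r [Hr _]]. apply HF. now exists r. }
  simpl. apply Rmult_le_compat_l; [lra|]. apply Rle_plus_epsilon. intros eps He.
  destruct (Happ eps He) as [r [Hr Hle]].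
  eapply Rle_trans; [apply Rinf_lb|]; eauto.
Qed.

Lemma ER_comparable_finite (r K : ER) k C d :
  ER_le (ER_scal k r) K -> ER_le K (ER_scal C (ER_plus (Fin d) r)) ->
  (r <> PInf <-> K <> PInf).
Proof. destruct r, K; simpl; intuition congruence. Qed.

Fixpoint psum (u : nat -> R) (N : nat) : R :=
  match N with O => 0 | S k => psum u k + u (S k) end.

Lemma psum_eq u N : psum u (S N) = sum_f_R0 (fun k => u (S k)) N.
Proof.
  induction N; simpl; [ring|]. simpl in IHN. rewrite IHN. reflexivity.
Qed.

Lemma psum_ge0 u N : (forall n, (1 <= n)%nat -> 0 <= u n) -> 0 <= psum u N.
Proof. intros H. induction N; simpl; [lra|]. pose proof (H (S N) ltac:(lia)). lra. Qed.

Lemma psum_le_succ u N : (forall n, (1 <= n)%nat -> 0 <= u n) -> psum u N <= psum u (S N).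
Proof. intros H. simpl. pose proof (H (S N) ltac:(lia)). lra. Qed.

Lemma psum_le u v N : (forall n, (1 <= n)%nat -> u n <= v n) -> psum u N <= psum v N.
Proof. intros H. induction N; simpl; [lra|]. pose proof (H (S N) ltac:(lia)). lra. Qed.

Lemma psum_plus u v N : psum (fun n => u n + v n) N = psum u N + psum v N.
Proof. induction N; simpl; [ring|]. rewrite IHN. ring. Qed.

Lemma psum_scal k u N : psum (fun n => k * u n) N = k * psum u N.
Proof. induction N; simpl; [ring|]. rewrite IHN. ring. Qed.

Lemma psum_geom N : psum (fun n => (/ 2) ^ n) N = 1 - (/ 2) ^ N.
Proof. induction N; simpl in *; [ring|]. rewrite IHN. field. Qed.

Lemma series_val_ge_psum u s N : (forall n, (1 <= n)%nat -> 0 <= u n) ->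
  series_val u = Fin s -> psum u N <= s.
Proof.
  intros Hu H. eapply Rle_trans; [now apply psum_le_succ|].
  rewrite psum_eq. apply (ER_sup_ge _ _ _ H). now exists N.
Qed.

Lemma series_val_le u D : (forall N, psum u N <= D) ->
  exists s, series_val u = Fin s /\ s <= D.
Proof.
  intros H. unfold series_val, ER_sup.
  destruct (excluded_middle_informative _) as [Hb|Hb].
  - eexists; split; [reflexivity|]. apply Rsup_lub.
    + exists (sum_f_R0 (fun k => u (S k)) 0). now exists 0%nat.
    + intros z [N ->]. rewrite <- psum_eq. apply H.
  - exfalso; apply Hb. exists D. intros z [N ->]. rewrite <- psum_eq. apply H.
Qed.

Lemma exp_le_mono x y : x <= y -> exp x <= exp y.
Proof. intros [H|H]; [left; now apply exp_increasing | subst; lra]. Qed.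

Lemma ln_le_mono x y : 0 < x -> x <= y -> ln x <= ln y.
Proof. intros Hx [H|H]; [left; now apply ln_increasing | subst; lra]. Qed.

Lemma ln_le_sub1 x : 0 < x -> ln x <= x - 1.
Proof. intros Hx. pose proof (exp_ineq1_le (ln x)). rewrite exp_ln in H; lra. Qed.

Lemma INR_ge1 n : (1 <= n)%nat -> 1 <= INR n.
Proof. intros Hn. apply (le_INR 1 n) in Hn. exact Hn. Qed.

Lemma ln_INR_ge0 n : (1 <= n)%nat -> 0 <= ln (INR n).
Proof. intros Hn. rewrite <- ln_1. apply ln_le_mono. lra. now apply INR_ge1. Qed.

Lemma ln2_pos : 0 < ln 2.
Proof. pose proof ln_lt_2. lra. Qed.

Lemma Rdiv_nonneg x z : 0 <= x -> 0 < z -> 0 <= x / z.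
Proof. intros. apply Rmult_le_pos; [lra | left; now apply Rinv_0_lt_compat]. Qed.

Lemma RiemannInt_le_const f u v (pr : Riemann_integrable f u v) M : u <= v ->
  (forall t, u < t < v -> f t <= M) -> RiemannInt pr <= M * (v - u).
Proof.
  intros Huv H. rewrite <- (RiemannInt_P15 (RiemannInt_P14 u v M)).
  now apply RiemannInt_P19.
Qed.

Lemma RiemannInt_ge_const f u v (pr : Riemann_integrable f u v) M : u <= v ->
  (forall t, u < t < v -> M <= f t) -> M * (v - u) <= RiemannInt pr.
Proof.
  intros Huv H. rewrite <- (RiemannInt_P15 (RiemannInt_P14 u v M)).
  now apply RiemannInt_P19.
Qed.

Lemma continuity_pt_local_lipschitz f t0 d C : 0 < d -> 0 <= C ->
  (forall t, Rabs (t - t0) < d -> Rabs (f t - f t0) <= C * Rabs (t - t0)) ->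
  continuity_pt f t0.
Proof.
  intros Hd HC H eps He. exists (Rmin d (eps / (C + 1))).
  split; [apply Rmin_pos; [lra | apply Rdiv_lt_0_compat; lra]|].
  intros t [_ Ht]. simpl in *. unfold R_dist in *.
  assert (Ht1 : Rabs (t - t0) < d) by (eapply Rlt_le_trans; [exact Ht | apply Rmin_l]).
  assert (Ht2 : Rabs (t - t0) < eps / (C + 1))
    by (eapply Rlt_le_trans; [exact Ht | apply Rmin_r]).
  assert (Heps : (C + 1) * (eps / (C + 1)) = eps) by (field; lra).
  pose proof (H t Ht1). pose proof (Rabs_pos (t - t0)). nra.
Qed.

(** ** Elementary facts on the K-functional of a normed pair *)

Section KFunctional.
Variables (P : NormedPair) (y : Ycar P).

(* The trivial decomposition [x = 0] is admissible, whence [K(y,t) <= ||y||_Y]. *)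
Lemma Yscal_zero k : Yscal P k (Yzero P) = Yzero P.
Proof.
  set (w := Yscal P k (Yzero P)).
  assert (Hw : Yadd P w w = w) by (unfold w; now rewrite <- Yscal_distr_v, Yadd_0).
  assert (H : Yadd P (Yopp P w) (Yadd P w w) = Yadd P (Yopp P w) w) by now rewrite Hw.
  now rewrite Yadd_assoc, Yadd_opp, Yadd_0 in H.
Qed.

Lemma Xnorm_zero : Xnorm P (Yzero P) = 0.
Proof.
  rewrite <- (Yscal_zero 0), Xnorm_scal by apply Xmem_0. rewrite Rabs_R0. ring.
Qed.

Lemma Ysub_zero : Ysub P y (Yzero P) = y.
Proof.
  assert (Hopp : Yopp P (Yzero P) = Yzero P).
  { pose proof (Yadd_opp P (Yzero P)) as H. now rewrite Yadd_comm, Yadd_0 in H. }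
  unfold Ysub. now rewrite Hopp, Yadd_comm, Yadd_0.
Qed.

Lemma Kset_nonneg t : 0 <= t -> forall r,
  (exists x, Xmem P x /\ r = Ynorm P (Ysub P y x) + t * Xnorm P x) -> 0 <= r.
Proof.
  intros Ht r [x [Hx ->]]. pose proof (Ynorm_nonneg P (Ysub P y x)).
  pose proof (Xnorm_nonneg P x Hx). nra.
Qed.

Lemma K_le t x : 0 <= t -> Xmem P x ->
  Kfun P y t <= Ynorm P (Ysub P y x) + t * Xnorm P x.
Proof. intros Ht Hx. apply Rinf_lb; [now apply Kset_nonneg | now exists x]. Qed.

Lemma K_ge t M : (forall x, Xmem P x -> M <= Ynorm P (Ysub P y x) + t * Xnorm P x) ->
  M <= Kfun P y t.
Proof.
  intros H. apply Rinf_glb.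
  - eexists. exists (Yzero P). split; [apply Xmem_0 | reflexivity].
  - intros r [x [Hx ->]]. now apply H.
Qed.

Lemma K_ge0 t : 0 <= t -> 0 <= Kfun P y t.
Proof.
  intros Ht. apply K_ge. intros x Hx. apply (Kset_nonneg t); auto. now exists x.
Qed.

Lemma K_le_norm t : 0 <= t -> Kfun P y t <= Ynorm P y.
Proof.
  intros Ht. pose proof (K_le t (Yzero P) Ht (Xmem_0 P)).
  rewrite Ysub_zero, Xnorm_zero in H. lra.
Qed.

Lemma K_approx t eps : 0 <= t -> 0 < eps -> exists x, Xmem P x /\
  Ynorm P (Ysub P y x) + t * Xnorm P x <= Kfun P y t + eps.
Proof.
  intros Ht He. apply NNPP. intros Hn.
  assert (Kfun P y t + eps <= Kfun P y t); [|lra].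
  apply K_ge. intros x Hx. apply Rnot_lt_le. intros Hlt. apply Hn. exists x. split; auto. lra.
Qed.

Lemma K_mono s t : 0 <= s -> s <= t -> Kfun P y s <= Kfun P y t.
Proof.
  intros Hs Hst. apply K_ge. intros x Hx.
  pose proof (K_le s x Hs Hx). pose proof (Xnorm_nonneg P x Hx). nra.
Qed.

Lemma K_ratio s t : 0 < s -> s <= t -> Kfun P y t <= (t / s) * Kfun P y s.
Proof.
  intros Hs Hst.
  assert (H : s / t * Kfun P y t <= Kfun P y s).
  { apply K_ge. intros x Hx.
    pose proof (K_le t x ltac:(lra) Hx). pose proof (Xnorm_nonneg P x Hx).
    pose proof (Ynorm_nonneg P (Ysub P y x)).
    assert (Hq : 0 < s / t <= 1).
    { split; [apply Rdiv_lt_0_compat; lra|].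
      apply Rmult_le_reg_r with t; [lra|]. field_simplify; lra. }
    assert (s / t * t = s) by (field; lra). nra. }
  replace (Kfun P y t) with ((t / s) * (s / t * Kfun P y t)) by (field; lra).
  apply Rmult_le_compat_l; [|exact H]. left; apply Rdiv_lt_0_compat; lra.
Qed.

Lemma K_increment s t : 0 < s -> s <= t ->
  Rabs (Kfun P y t - Kfun P y s) <= (t - s) / s * Ynorm P y.
Proof.
  intros Hs Hst. pose proof (K_mono s t ltac:(lra) Hst). pose proof (K_ratio s t Hs Hst).
  pose proof (K_le_norm s ltac:(lra)).
  assert (Hq : 0 <= (t - s) / s) by (apply Rdiv_nonneg; lra).
  assert (E : t / s * Kfun P y s = Kfun P y s + (t - s) / s * Kfun P y s) by (field; lra).
  rewrite Rabs_right by lra. nra.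
Qed.

(* Near [t0 > 0], [K(y,.)] is Lipschitz with constant [2 ||y|| / t0]. *)
Lemma K_cont t0 : 0 < t0 -> continuity_pt (Kfun P y) t0.
Proof.
  intros Ht0. pose proof (Ynorm_nonneg P y).
  apply (continuity_pt_local_lipschitz _ t0 (t0 / 2) (2 * Ynorm P y / t0)); [lra | |].
  { apply Rdiv_nonneg; lra. }
  intros t Ht. apply Rabs_def2 in Ht as [Ht1 Ht2].
  destruct (Rle_or_lt t0 t) as [h|h].
  - pose proof (K_increment t0 t Ht0 h). rewrite (Rabs_right (t - t0)) by lra.
    replace (2 * Ynorm P y / t0 * (t - t0)) with (2 * ((t - t0) / t0 * Ynorm P y))
      by (field; lra).
    assert (0 <= (t - t0) / t0 * Ynorm P y)
      by (apply Rmult_le_pos; [apply Rdiv_nonneg|]; lra).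
    lra.
  - pose proof (K_increment t t0 ltac:(lra) ltac:(lra)).
    rewrite Rabs_minus_sym, (Rabs_left (t - t0)) by lra.
    assert (Hinv : / t <= 2 / t0).
    { replace (2 / t0) with (/ (t0 / 2)) by (field; lra).
      apply Rinv_le_contravar; lra. }
    assert (0 <= (t0 - t) * Ynorm P y) by (apply Rmult_le_pos; lra).
    unfold Rdiv in *. nra.
Qed.

End KFunctional.

(** ** The dyadic scale [tau n = 2^{-n(2m+theta)} n^{-a}] and the weight *)

Section Scale.
Variables (theta a : R) (m : nat).
Hypotheses (Htheta : 0 < theta) (Hm : (1 <= m)%nat) (Ha : 0 <= a).

Definition L : R := 2 * INR m + theta.
Definition gam : R := theta / L.
Definition bexp : R := 2 * INR m * a / L.

Lemma L_pos : 0 < L.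
Proof. unfold L. pose proof (INR_ge1 m Hm). lra. Qed.

Lemma L_ln2_pos : 0 < L * ln 2.
Proof. pose proof L_pos. pose proof ln2_pos. now apply Rmult_lt_0_compat. Qed.

Lemma gam_L : gam * L = theta.
Proof. unfold gam. field. pose proof L_pos. lra. Qed.

Lemma gam_bounds : 0 <= gam <= 1.
Proof.
  pose proof L_pos. pose proof (INR_ge1 m Hm). unfold gam. split.
  - left; apply Rdiv_lt_0_compat; lra.
  - apply Rmult_le_reg_r with L; auto. field_simplify; unfold L; lra.
Qed.

Lemma bexp_eq : bexp = a - gam * a.
Proof. pose proof L_pos. unfold bexp, gam, L in *. field. lra. Qed.

Lemma bexp_ge0 : 0 <= bexp.
Proof. rewrite bexp_eq. pose proof gam_bounds. nra. Qed.

(* [logscale n = - ln (tau n)], where [tau n = 2^{-nL} n^{-a}]. *)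
Definition logscale (n : nat) : R := INR n * L * ln 2 + a * ln (INR n).
Definition tau (n : nat) : R := exp (- logscale n).

(* [logB n = ln (2^{n theta} n^a)]: the coefficient of [||y - x_n||_Y] in [pi];
   since [2^{n theta} n^a tau n = 2^{-2nm}], the n-th term of [pi] is
   [exp (logB n) (||y - x_n||_Y + tau n ||x_n||_X)]. *)
Definition logB (n : nat) : R := INR n * theta * ln 2 + a * ln (INR n).

(* The blocks [tau n, c tau n] are disjoint and of length comparable to [tau n]. *)
Definition c : R := exp (L * ln 2 / 2).

Lemma logscale_ge n : (1 <= n)%nat -> INR n * (L * ln 2) <= logscale n.
Proof.
  intros Hn. unfold logscale. pose proof (ln_INR_ge0 n Hn).
  assert (0 <= a * ln (INR n)) by (apply Rmult_le_pos; lra). lra.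
Qed.

Lemma logscale_S n : (1 <= n)%nat -> logscale n + L * ln 2 <= logscale (S n).
Proof.
  intros Hn. unfold logscale. rewrite S_INR.
  assert (ln (INR n) <= ln (INR n + 1)) by (pose proof (INR_ge1 n Hn); apply ln_le_mono; lra).
  assert (a * ln (INR n) <= a * ln (INR n + 1)) by (apply Rmult_le_compat_l; lra). lra.
Qed.

Lemma tau_pos n : 0 < tau n.
Proof. apply exp_pos. Qed.

Lemma c_gt1 : 1 < c.
Proof. unfold c. rewrite <- exp_0. apply exp_increasing. pose proof L_ln2_pos. lra. Qed.

Lemma c_tau n : c * tau n = exp (- (logscale n - L * ln 2 / 2)).
Proof. unfold c, tau. rewrite <- exp_plus. f_equal. ring. Qed.

Lemma c_tau_lt1 n : (1 <= n)%nat -> c * tau n < 1.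
Proof.
  intros Hn. rewrite c_tau, <- exp_0. apply exp_increasing.
  pose proof (logscale_ge n Hn). pose proof (INR_ge1 n Hn). pose proof L_ln2_pos. nra.
Qed.

Lemma tau_lt1 n : (1 <= n)%nat -> tau n < 1.
Proof.
  intros Hn. pose proof (c_tau_lt1 n Hn). pose proof c_gt1. pose proof (tau_pos n). nra.
Qed.

Lemma c_tau_S n : (1 <= n)%nat -> c * tau (S n) <= tau n.
Proof.
  intros Hn. rewrite c_tau. apply exp_le_mono.
  pose proof (logscale_S n Hn). pose proof L_ln2_pos. lra.
Qed.

Lemma tau_S_le n : (1 <= n)%nat -> tau (S n) <= tau n.
Proof.
  intros Hn. pose proof (c_tau_S n Hn). pose proof c_gt1. pose proof (tau_pos (S n)). nra.
Qed.

Lemma tau_le_tau1 n : (1 <= n)%nat -> tau n <= tau 1.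
Proof.
  induction n as [|n IH]; intros Hn; [lia|]. destruct n; [lra|].
  eapply Rle_trans; [apply tau_S_le; lia | apply IH; lia].
Qed.

Lemma tau_small u : 0 < u -> exists N, tau (S N) <= u.
Proof.
  intros Hu. pose proof L_ln2_pos.
  destruct (INR_unbounded (- ln u / (L * ln 2))) as [N HN]. exists N.
  unfold tau. rewrite <- (exp_ln u) by auto. apply exp_le_mono.
  pose proof (logscale_ge (S N) ltac:(lia)). rewrite S_INR in H0.
  assert (- ln u < INR N * (L * ln 2)).
  { apply Rmult_lt_reg_r with (/ (L * ln 2)); [now apply Rinv_0_lt_compat|].
    rewrite Rmult_assoc, Rinv_r, Rmult_1_r by lra. exact HN. }
  nra.
Qed.

Definition weight (t : R) : R := Rpower t (- gam) * Rpower (Rabs (ln t)) bexp / t.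
Definition logweight (s : R) : R := (1 + gam) * s + bexp * ln s.

Lemma weight_exp t : 0 < t < 1 -> weight t = exp (logweight (- ln t)).
Proof.
  intros Ht. assert (ln t < 0) by (rewrite <- ln_1; apply ln_increasing; lra).
  assert (Hinv : / t = exp (- ln t)) by (rewrite exp_Ropp, exp_ln; lra).
  unfold weight, logweight, Rpower, Rdiv. rewrite Rabs_left, Hinv by auto.
  rewrite <- !exp_plus. f_equal. ring.
Qed.

Lemma weight_exp_opp s : 0 < s -> weight (exp (- s)) = exp (logweight s).
Proof.
  intros Hs. rewrite weight_exp, ln_exp, Ropp_involutive; [reflexivity|].
  split; [apply exp_pos|]. rewrite <- exp_0. apply exp_increasing. lra.
Qed.

Lemma weight_pos t : 0 < t < 1 -> 0 < weight t.
Proof. intros Ht. rewrite weight_exp by auto. apply exp_pos. Qed.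

(* The weight is nonincreasing on [(0,1)] because [gamma >= 0] and [b >= 0]. *)
Lemma weight_antitone u t : 0 < u -> u <= t -> t < 1 -> weight t <= weight u.
Proof.
  intros Hu Hut Ht. rewrite !weight_exp by lra. apply exp_le_mono.
  assert (ln t < 0) by (rewrite <- ln_1; apply ln_increasing; lra).
  pose proof (ln_le_mono u t Hu Hut). pose proof gam_bounds. pose proof bexp_ge0.
  assert (ln (- ln t) <= ln (- ln u)) by (apply ln_le_mono; lra).
  unfold logweight.
  assert (bexp * ln (- ln t) <= bexp * ln (- ln u)) by (apply Rmult_le_compat_l; lra). nra.
Qed.

Lemma weight_cont t : 0 < t < 1 -> continuity_pt weight t.
Proof.
  intros Ht. assert (ln t < 0) by (rewrite <- ln_1; apply ln_increasing; lra).
  assert (C1 : continuity_pt (fun u => Rpower u (- gam)) t).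
  { apply derivable_continuous_pt. exists (- gam * Rpower t (- gam - 1)).
    apply derivable_pt_lim_power. lra. }
  assert (C2 : continuity_pt (comp (fun u => Rpower u bexp) (comp Rabs ln)) t).
  { apply continuity_pt_comp.
    - apply continuity_pt_comp; [|apply Rcontinuity_abs].
      apply derivable_continuous_pt. exists (/ t). apply derivable_pt_lim_ln. lra.
    - apply derivable_continuous_pt. exists (bexp * Rpower (Rabs (ln t)) (bexp - 1)).
      apply derivable_pt_lim_power. unfold comp. rewrite Rabs_left; lra. }
  assert (C3 : continuity_pt id t) by apply derivable_continuous_pt, derivable_pt_id.
  apply (continuity_pt_div (fun u => Rpower u (- gam) * Rpower (Rabs (ln u)) bexp) id);
    [now apply continuity_pt_mult | exact C3 | unfold id; lra].
Qed.

(* Constants of the comparison [weight ~ 2^{n theta} n^a / tau n] on the n-th block. *)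
Definition lnM1 : R :=
  theta * ln 2 + L * ln 2 + bexp * ln 2 + bexp * ln (L * ln 2 + a) + 2 * a * ln 2.
Definition lnm1 : R := - (theta * ln 2 / 2) + bexp * ln (L * ln 2 / 2) - L * ln 2 / 2.

(* Key computation: [(1 + gamma) L = L + theta] and [(1 + gamma) a + b = 2 a]. *)
Lemma logweight_upper n : (1 <= n)%nat ->
  logweight (logscale (S n)) <= lnM1 + logB n + logscale n.
Proof.
  intros Hn. pose proof (INR_ge1 n Hn) as Hn1. pose proof (ln_INR_ge0 n Hn) as Hln.
  pose proof ln2_pos as Hl2. pose proof L_ln2_pos as HLl. pose proof gam_bounds as Hg.
  pose proof bexp_ge0 as Hb.
  assert (HlnS : ln (INR n + 1) <= ln 2 + ln (INR n)).
  { rewrite <- ln_mult by lra. apply ln_le_mono; lra. }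
  assert (HlnS' : ln (INR n + 1) <= INR n) by (pose proof (ln_le_sub1 (INR n + 1) ltac:(lra)); lra).
  set (s := logscale (S n)).
  assert (Hs : 0 < s).
  { unfold s. pose proof (logscale_ge (S n) ltac:(lia)). rewrite S_INR in *. nra. }
  assert (Hs2 : s <= 2 * INR n * (L * ln 2 + a)).
  { unfold s, logscale. rewrite S_INR.
    assert (a * ln (INR n + 1) <= a * INR n) by (apply Rmult_le_compat_l; lra). nra. }
  assert (Hlns : ln s <= ln 2 + ln (INR n) + ln (L * ln 2 + a)).
  { rewrite <- !ln_mult by nra. apply ln_le_mono; nra. }
  assert (H1 : a * (1 + gam) * ln (INR n + 1) <= a * (1 + gam) * (ln 2 + ln (INR n)))
    by (apply Rmult_le_compat_l; nra).
  assert (H2 : bexp * ln s <= bexp * (ln 2 + ln (INR n) + ln (L * ln 2 + a)))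
    by (apply Rmult_le_compat_l; lra).
  assert (H3 : gam * L * ((INR n + 1) * ln 2) = theta * ((INR n + 1) * ln 2))
    by now rewrite gam_L.
  assert (H4 : a * gam * ln 2 <= a * ln 2) by (apply Rmult_le_compat_r; nra).
  unfold logweight, lnM1, logB. fold s. unfold s at 1. unfold logscale. rewrite S_INR.
  rewrite bexp_eq in *. lra.
Qed.

Lemma logweight_lower n : (1 <= n)%nat ->
  lnm1 + logB n + logscale n <= logweight (logscale n - L * ln 2 / 2).
Proof.
  intros Hn. pose proof (INR_ge1 n Hn) as Hn1. pose proof (ln_INR_ge0 n Hn) as Hln.
  pose proof L_ln2_pos as HLl. pose proof gam_bounds as Hg. pose proof bexp_ge0 as Hb.
  set (s := logscale n - L * ln 2 / 2).
  assert (Hs : INR n * (L * ln 2 / 2) <= s) by (unfold s; pose proof (logscale_ge n Hn); nra).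
  assert (Hlns : ln (INR n) + ln (L * ln 2 / 2) <= ln s).
  { rewrite <- ln_mult by lra. apply ln_le_mono; nra. }
  assert (H2 : bexp * (ln (INR n) + ln (L * ln 2 / 2)) <= bexp * ln s)
    by (apply Rmult_le_compat_l; lra).
  assert (H3 : gam * L * (INR n * ln 2) = theta * (INR n * ln 2)) by now rewrite gam_L.
  assert (H4 : gam * L * (ln 2 / 2) = theta * (ln 2 / 2)) by now rewrite gam_L.
  unfold logweight, lnm1, logB. fold s. unfold s at 1. unfold logscale.
  rewrite bexp_eq in *. lra.
Qed.

Lemma weight_upper n t : (1 <= n)%nat -> tau (S n) <= t <= tau n ->
  weight t <= exp (lnM1 + logB n + logscale n).
Proof.
  intros Hn Ht. pose proof (tau_pos (S n)). pose proof (tau_lt1 n Hn).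
  eapply Rle_trans; [apply (weight_antitone (tau (S n))); lra|].
  unfold tau at 1. rewrite weight_exp_opp.
  - apply exp_le_mono. now apply logweight_upper.
  - pose proof (logscale_ge (S n) ltac:(lia)). rewrite S_INR in *.
    pose proof L_ln2_pos. pose proof (INR_ge1 n Hn). nra.
Qed.

Lemma weight_lower n t : (1 <= n)%nat -> tau n <= t <= c * tau n ->
  exp (lnm1 + logB n + logscale n) <= weight t.
Proof.
  intros Hn Ht. pose proof (tau_pos n). pose proof (c_tau_lt1 n Hn).
  eapply Rle_trans; [|apply (weight_antitone t (c * tau n)); lra].
  rewrite c_tau, weight_exp_opp.
  - apply exp_le_mono. now apply logweight_lower.
  - pose proof (logscale_ge n Hn). pose proof L_ln2_pos. pose proof (INR_ge1 n Hn). nra.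
Qed.

(* [M0] bounds the weight on [tau 1, 1); [M1] and [Dlow = m1 (c - 1)] are the
   constants of the upper and lower block estimates; [CC] is the constant of the theorem. *)
Definition M0 : R := weight (tau 1).
Definition M1 : R := exp lnM1.
Definition Dlow : R := exp lnm1 * (c - 1).
Definition CC : R := M0 + M1 + / Dlow.

Lemma M1_pos : 0 < M1.
Proof. apply exp_pos. Qed.

Lemma M0_pos : 0 < M0.
Proof. apply weight_pos. split; [apply tau_pos | apply tau_lt1; lia]. Qed.

Lemma Dlow_pos : 0 < Dlow.
Proof. unfold Dlow. pose proof c_gt1. apply Rmult_lt_0_compat; [apply exp_pos | lra]. Qed.

Lemma CC_pos : 0 < CC.
Proof.
  unfold CC. pose proof M0_pos. pose proof M1_pos.
  pose proof (Rinv_0_lt_compat _ Dlow_pos). lra.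
Qed.

Lemma inv_tau n : / tau n = exp (logscale n).
Proof. unfold tau. now rewrite exp_Ropp, Rinv_inv. Qed.

Section Integrand.
Variables (P : NormedPair) (y : Ycar P).

Local Notation f := (Kintegrand P gam bexp y).

Lemma integrand_eq t : f t = weight t * Kfun P y t.
Proof. unfold Kintegrand, weight, Rdiv. ring. Qed.

Lemma integrand_ge0 t : 0 < t < 1 -> 0 <= f t.
Proof.
  intros Ht. rewrite integrand_eq. apply Rmult_le_pos.
  - left; now apply weight_pos.
  - apply K_ge0; lra.
Qed.

Lemma integrand_integrable u v : 0 < u -> u <= v -> v < 1 -> Riemann_integrable f u v.
Proof.
  intros Hu Huv Hv. apply continuity_implies_RiemannInt; auto. intros t Ht.
  apply (continuity_pt_locally_ext (weight * Kfun P y)%F _ 1); [lra| |].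
  - intros s _. symmetry. apply integrand_eq.
  - apply continuity_pt_mult; [apply weight_cont | apply K_cont]; lra.
Qed.

(* [Kblock n = 2^{n theta} n^a K(y, tau n)]: the discrete counterpart of
   both [|y|_{gamma,b}] and [rho(y)]. *)
Definition Kblock (n : nat) : R := exp (logB n) * Kfun P y (tau n).

Lemma Kblock_ge0 n : 0 <= Kblock n.
Proof. apply Rmult_le_pos; [left; apply exp_pos | apply K_ge0; left; apply tau_pos]. Qed.

Lemma integrand_upper n t : (1 <= n)%nat -> tau (S n) <= t <= tau n ->
  f t <= M1 * Kblock n / tau n.
Proof.
  intros Hn Ht. pose proof (tau_pos (S n)). pose proof (tau_lt1 n Hn).
  rewrite integrand_eq. unfold Rdiv, M1, Kblock. rewrite inv_tau.
  replace (exp lnM1 * (exp (logB n) * Kfun P y (tau n)) * exp (logscale n))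
    with (exp (lnM1 + logB n + logscale n) * Kfun P y (tau n)) by (rewrite !exp_plus; ring).
  apply Rmult_le_compat.
  - left; apply weight_pos; lra.
  - apply K_ge0; lra.
  - now apply weight_upper.
  - apply K_mono; lra.
Qed.

Lemma integrand_lower n t : (1 <= n)%nat -> tau n <= t <= c * tau n ->
  exp lnm1 * Kblock n / tau n <= f t.
Proof.
  intros Hn Ht. pose proof (tau_pos n).
  rewrite integrand_eq. unfold Rdiv, Kblock. rewrite inv_tau.
  replace (exp lnm1 * (exp (logB n) * Kfun P y (tau n)) * exp (logscale n))
    with (exp (lnm1 + logB n + logscale n) * Kfun P y (tau n)) by (rewrite !exp_plus; ring).
  apply Rmult_le_compat.
  - left; apply exp_pos.
  - apply K_ge0; lra.
  - now apply weight_lower.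
  - apply K_mono; lra.
Qed.

(* Near [t = 1] only the trivial bound [K(y,t) <= ||y||_Y] is available. *)
Lemma integrand_top t : tau 1 <= t < 1 -> f t <= M0 * Ynorm P y.
Proof.
  intros Ht. pose proof (tau_pos 1). rewrite integrand_eq.
  apply Rmult_le_compat.
  - left; apply weight_pos; lra.
  - apply K_ge0; lra.
  - apply weight_antitone; lra.
  - apply K_le_norm; lra.
Qed.

(* Integral estimates on single blocks (lengths at most [tau n], resp. [(c - 1) tau n]). *)
Lemma RiemannInt_block_upper n u v (pr : Riemann_integrable f u v) : (1 <= n)%nat ->
  tau (S n) <= u -> u <= v -> v <= tau n -> RiemannInt pr <= M1 * Kblock n.
Proof.
  intros Hn Hu Huv Hv. pose proof (tau_pos n). pose proof (tau_pos (S n)).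
  eapply Rle_trans.
  { apply (RiemannInt_le_const _ _ _ pr (M1 * Kblock n / tau n)); auto.
    intros t Ht. apply integrand_upper; auto; lra. }
  assert (0 <= M1 * Kblock n / tau n).
  { apply Rdiv_nonneg; [apply Rmult_le_pos; [left; apply M1_pos | apply Kblock_ge0] | lra]. }
  assert (E : M1 * Kblock n / tau n * tau n = M1 * Kblock n) by (field; lra).
  rewrite <- E at 2. apply Rmult_le_compat_l; lra.
Qed.

Lemma RiemannInt_block_lower n (pr : Riemann_integrable f (tau n) (c * tau n)) :
  (1 <= n)%nat -> Dlow * Kblock n <= RiemannInt pr.
Proof.
  intros Hn. pose proof (tau_pos n). pose proof c_gt1.
  eapply Rle_trans; [|apply (RiemannInt_ge_const _ _ _ pr (exp lnm1 * Kblock n / tau n))].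
  - right. unfold Dlow. field. lra.
  - nra.
  - intros t Ht. apply integrand_lower; auto; lra.
Qed.

Lemma RiemannInt_upper N : forall u v (pr : Riemann_integrable f u v),
  tau (S N) <= u -> u <= v -> v < 1 -> RiemannInt pr <= M0 * Ynorm P y + M1 * psum Kblock N.
Proof.
  pose proof M0_pos. pose proof (Ynorm_nonneg P y). pose proof M1_pos.
  assert (HM : 0 <= M0 * Ynorm P y) by (apply Rmult_le_pos; lra).
  induction N as [|N IH]; intros u v pr Hu Huv Hv.
  - simpl psum. eapply Rle_trans.
    { apply (RiemannInt_le_const _ _ _ pr (M0 * Ynorm P y)); auto.
      intros t Ht. apply integrand_top. lra. }
    pose proof (tau_pos 1). nra.
  - pose proof (Kblock_ge0 (S N)). pose proof (psum_ge0 Kblock N (fun n _ => Kblock_ge0 n)).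
    simpl psum.
    destruct (Rle_or_lt (tau (S N)) u) as [h|h]; [eapply Rle_trans; [apply IH; auto | nra]|].
    destruct (Rle_or_lt v (tau (S N))) as [h'|h'].
    + eapply Rle_trans; [apply RiemannInt_block_upper with (n := S N); auto; lia || lra|].
      nra.
    + assert (Hw : u <= tau (S N) <= v) by lra.
      rewrite <- (RiemannInt_P26 (RiemannInt_P22 pr Hw) (RiemannInt_P23 pr Hw) pr).
      pose proof (RiemannInt_block_upper (S N) _ _ (RiemannInt_P22 pr Hw)
        ltac:(lia) ltac:(lra) ltac:(lra) ltac:(lra)).
      pose proof (IH _ _ (RiemannInt_P23 pr Hw) ltac:(lra) ltac:(lra) ltac:(lra)).
      lra.
Qed.

(* The disjoint blocks [tau n, c tau n], n <= N, lie in [tau N, c tau 1]. *)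
Lemma RiemannInt_lower N (pr : Riemann_integrable f (tau N) (c * tau 1)) :
  (1 <= N)%nat -> Dlow * psum Kblock N <= RiemannInt pr.
Proof.
  revert pr. induction N as [|N IH]; intros pr HN; [lia|].
  destruct N.
  - simpl psum. rewrite Rplus_0_l. now apply RiemannInt_block_lower.
  - pose proof c_gt1. pose proof (tau_pos (S (S N))). pose proof (tau_pos 1).
    pose proof (c_tau_S (S N) ltac:(lia)). pose proof (tau_le_tau1 (S N) ltac:(lia)).
    pose proof (c_tau_lt1 1 ltac:(lia)).
    assert (pr1 : Riemann_integrable f (tau (S (S N))) (c * tau (S (S N))))
      by (apply integrand_integrable; nra).
    assert (pr2 : Riemann_integrable f (c * tau (S (S N))) (tau (S N)))
      by (apply integrand_integrable; nra).
    assert (pr3 : Riemann_integrable f (tau (S N)) (c * tau 1))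
      by (apply integrand_integrable; nra).
    assert (pr12 : Riemann_integrable f (tau (S (S N))) (tau (S N)))
      by (apply integrand_integrable; nra).
    rewrite <- (RiemannInt_P26 pr12 pr3 pr), <- (RiemannInt_P26 pr1 pr2 pr12).
    pose proof (IH pr3 ltac:(lia)). pose proof (RiemannInt_block_lower (S (S N)) pr1 ltac:(lia)).
    assert (0 <= RiemannInt pr2).
    { replace 0 with (0 * (tau (S N) - c * tau (S (S N)))) by ring.
      apply RiemannInt_ge_const; auto. intros t Ht. apply integrand_ge0. nra. }
    change (psum Kblock (S (S N))) with (psum Kblock (S N) + Kblock (S (S N))). lra.
Qed.

End Integrand.

Section Comparison.
Variables (P : NormedPair) (y : Ycar P).

Lemma pi_term_factor x n : pi_term P theta m a y x n =
  exp (logB n) * (Ynorm P (Ysub P y (x n)) + tau n * Xnorm P (x n)).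
Proof.
  assert (E1 : Rpower 2 (INR n * theta) * Rpower (INR n) a = exp (logB n)).
  { unfold Rpower, logB. rewrite <- exp_plus. f_equal; ring. }
  assert (E2 : Rpower 2 (- (2 * INR n * INR m)) = exp (logB n) * tau n).
  { unfold Rpower, tau, logB, logscale, L. rewrite <- exp_plus. f_equal; ring. }
  unfold pi_term. rewrite E1, E2. ring.
Qed.

Lemma Kblock_le_pi_term x n : Xmem P (x n) -> Kblock P y n <= pi_term P theta m a y x n.
Proof.
  intros Hx. rewrite pi_term_factor. apply Rmult_le_compat_l; [left; apply exp_pos|].
  apply K_le; [left; apply tau_pos | exact Hx].
Qed.

(* Choosing [x_n] almost optimal in [K(y, tau n)] makes [pi] close to the block sum. *)
Lemma near_optimal_sequence eps : 0 < eps -> exists x : nat -> Ycar P,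
  (forall n, Xmem P (x n)) /\
  (forall n, pi_term P theta m a y x n <= Kblock P y n + eps * (/ 2) ^ n).
Proof.
  intros He.
  assert (Hex : forall n, exists z, Xmem P z /\
      Ynorm P (Ysub P y z) + tau n * Xnorm P z <= Kfun P y (tau n) + eps * (/ 2) ^ n / exp (logB n)).
  { intro n. apply K_approx; [left; apply tau_pos|].
    apply Rdiv_lt_0_compat; [apply Rmult_lt_0_compat; [lra | apply pow_lt; lra] | apply exp_pos]. }
  destruct (choice _ Hex) as [x Hx]. exists x. split; [apply Hx|].
  intro n. rewrite pi_term_factor. destruct (Hx n) as [_ Hn]. pose proof (exp_pos (logB n)).
  unfold Kblock.
  replace (exp (logB n) * Kfun P y (tau n) + eps * (/ 2) ^ n)
    with (exp (logB n) * (Kfun P y (tau n) + eps * (/ 2) ^ n / exp (logB n))) by (field; lra).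
  apply Rmult_le_compat_l; lra.
Qed.

Definition pi_values (v : ER) : Prop := exists x : nat -> Ycar P,
  (forall n, (1 <= n)%nat -> Xmem P (x n)) /\ v = pi_val P theta m a y x.

Lemma pi_values_nonneg r : pi_values (Fin r) -> 0 <= r.
Proof.
  intros [x [Hx Hr]]. change 0 with (psum (pi_term P theta m a y x) 0).
  apply series_val_ge_psum; [|now symmetry].
  intros n Hn. eapply Rle_trans; [apply Kblock_ge0 | now apply Kblock_le_pi_term, Hx].
Qed.

Lemma Knorm_upper :
  ER_le (Knorm P gam bexp y) (ER_scal CC (ER_plus (Fin (Ynorm P y)) (rho P theta m a y))).
Proof.
  apply ER_sup_le_scal_inf; [apply CC_pos| |].
  { exists (RiemannInt (integrand_integrable P y (/ 2) (/ 2) ltac:(lra) ltac:(lra) ltac:(lra))).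
    do 3 eexists. repeat split; [lra | lra | lra]. }
  intros e r [u [v [pr [Hu [Huv [Hv ->]]]]]] Hr.
  destruct (tau_small u Hu) as [N HN].
  pose proof (RiemannInt_upper P y N u v pr HN Huv Hv).
  destruct Hr as [x [Hx Hr]].
  assert (Hpi : psum (Kblock P y) N <= r).
  { eapply Rle_trans; [apply psum_le; intros n Hn; now apply Kblock_le_pi_term, Hx|].
    apply series_val_ge_psum; [|now symmetry].
    intros n Hn. eapply Rle_trans; [apply Kblock_ge0 | now apply Kblock_le_pi_term, Hx]. }
  assert (Hr0 : 0 <= r) by (apply pi_values_nonneg; now exists x).
  pose proof M0_pos. pose proof M1_pos. pose proof (Rinv_0_lt_compat _ Dlow_pos).
  pose proof (Ynorm_nonneg P y). unfold CC. nra.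
Qed.

Lemma rho_lower : ER_le (ER_scal (/ CC) (rho P theta m a y)) (Knorm P gam bexp y).
Proof.
  destruct (Knorm P gam bexp y) as [J|] eqn:HK; [|destruct (rho P theta m a y); exact I].
  pose proof Dlow_pos as HD.
  assert (Hsum : forall N, psum (Kblock P y) N <= J / Dlow).
  { intro N. apply Rle_trans with (psum (Kblock P y) (S N));
      [apply psum_le_succ; intros; apply Kblock_ge0|].
    pose proof (tau_le_tau1 (S N) ltac:(lia)). pose proof (c_tau_lt1 1 ltac:(lia)).
    pose proof c_gt1. pose proof (tau_pos (S N)).
    assert (pr : Riemann_integrable (Kintegrand P gam bexp y) (tau (S N)) (c * tau 1))
      by (apply integrand_integrable; nra).
    pose proof (RiemannInt_lower P y (S N) pr ltac:(lia)).
    assert (RiemannInt pr <= J) by (apply (ER_sup_ge _ _ _ HK); exists (tau (S N)), (c * tau 1), pr;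
                                       repeat split; nra).
    apply Rmult_le_reg_l with Dlow; auto. unfold Rdiv.
    rewrite (Rmult_comm J), <- Rmult_assoc, Rinv_r, Rmult_1_l by lra. lra. }
  apply ER_le_trans with (Fin (/ CC * (J / Dlow))).
  - apply ER_scal_inf_le; [apply Rinv_0_lt_compat, CC_pos | apply pi_values_nonneg|].
    intros eps He. destruct (near_optimal_sequence eps He) as [x [Hx Hpi]].
    destruct (series_val_le (pi_term P theta m a y x) (J / Dlow + eps)) as [s [Hs Hle]].
    + intro N. eapply Rle_trans; [apply psum_le; intros n _; apply Hpi|].
      rewrite psum_plus, psum_scal, psum_geom. pose proof (Hsum N).
      assert (0 < (/ 2) ^ N) by (apply pow_lt; lra). nra.
    + exists s. split; [|exact Hle]. exists x. split; [intros; apply Hx | now symmetry].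
  - simpl. pose proof (Hsum 0%nat) as H0. simpl in H0.
    assert (HC : / CC <= Dlow).
    { rewrite <- (Rinv_inv Dlow). apply Rinv_le_contravar; [now apply Rinv_0_lt_compat|].
      unfold CC. pose proof M0_pos. pose proof M1_pos. lra. }
    replace J with (Dlow * (J / Dlow)) at 2 by (field; lra).
    apply Rmult_le_compat_r; lra.
Qed.

End Comparison.
End Scale.

Theorem mainTheorem14 :
  forall (theta : R) (m : nat) (a : R),
    0 < theta -> (1 <= m)%nat -> 0 <= a ->
    let gamma := theta / (2 * INR m + theta) in
    let b := 2 * INR m * a / (2 * INR m + theta) in
    (forall (P : NormedPair) (y : Ycar P),
        Sspace P theta m a y <-> Kspace P gamma b y) /\
    exists C : R, 0 < C /\
      forall (P : NormedPair) (y : Ycar P),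
        ER_le (ER_scal (/ C) (rho P theta m a y)) (Knorm P gamma b y) /\
        ER_le (Knorm P gamma b y)
              (ER_scal C (ER_plus (Fin (Ynorm P y)) (rho P theta m a y))).
Proof.
  intros theta m a Htheta Hm Ha gamma b.
  change gamma with (gam theta m). change b with (bexp theta a m).
  split.
  - intros P y. apply (ER_comparable_finite _ _ _ _ _
      (rho_lower theta a m Htheta Hm Ha P y) (Knorm_upper theta a m Htheta Hm Ha P y)).
  - exists (CC theta a m). split; [now apply CC_pos|].
    intros P y. split; [apply rho_lower | apply Knorm_upper]; auto.
Qed.
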